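(* Let $A$ be a locally convex topological vector space over $\mathbb C$ and $K\subset A$. Then $$\{V\in\mathrm{Max}\,A: F(V)\cap S(K,\mathbb C\setminus\{0\})\ne\emptyset\}\subset\check K,$$ with equality if $K$ is convex and compact.
   Context: $\mathrm{Max}\,A$ is the set of closed subspaces of $A$; $A^\vee$ the continuous dual; $F(V)=\{\phi\in A^\vee:\phi|_V=0\}$; $S(K,U)=\{\phi\in A^\vee:\phi(K)\subset U\}$; $\check K=\{V\in\mathrm{Max}\,A: V\cap K=\emptyset\}$. *)

(* The scalar field C is modelled as R[i] (complex
   numbers over an arbitrary realType R, from mathcomp-real-closed), with the
   norm topology given by the regular lmodule R[i]^o. *)
From HB Require Import structures.
From mathcomp Require Import all_boot all_order all_algebra.
From mathcomp Require Import all_classical all_reals all_analysis.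
From mathcomp Require Export complex.
Export Order.TTheory GRing.Theory Num.Theory.
Export numFieldNormedType.Exports.

Set Implicit Arguments.
Unset Strict Implicit.
Unset Printing Implicit Defensive.

Local Open Scope classical_set_scope.
Local Open Scope ring_scope.

Section Defs.
Variables (R : realType) (A : tvsType R[i]).

Definition is_subspace (V : set A) : Prop :=
  V 0 /\ forall (a : R[i]) (x y : A), V x -> V y -> V (a *: x + y).

Definition MaxA : set (set A) := [set V | closed V /\ is_subspace V].

Definition cdual : set (A -> R[i]^o) :=
  [set phi : A -> R[i]^o | (forall (a : R[i]) (x y : A), phi (a *: x + y) = a *: phi x + phi y)
             /\ continuous phi].

Definition Fann (V : set A) : set (A -> R[i]^o) :=
  [set phi : A -> R[i]^o | cdual phi /\ forall v, V v -> phi v = 0].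

Definition Sset (K : set A) (U : set R[i]^o) : set (A -> R[i]^o) :=
  [set phi : A -> R[i]^o | cdual phi /\ phi @` K `<=` U].

Definition checkK (K : set A) : set (set A) :=
  [set V | MaxA V /\ V `&` K = set0].

End Defs.

(* A functional vanishing on V and nowhere zero on K forces V and K apart.
   Conversely, let K be convex compact and V a closed subspace missing K.
   Compactness gives a convex neighbourhood U of 0 with (K + U) cap V empty,
   and for k0 in K the set W = K + U + V - k0 is convex and absorbing, while
   t (-k0) lies in W for no t > 1.  A Zorn's lemma argument on partial linear
   functionals bounded by 1 on W (real Hahn-Banach) yields a real functional f
   with f (-k0) = 1 and f <= 1 on W: it vanishes on the subspace V, is
   negative on K and bounded on U, hence continuous.  The complex functional
   x |-> f x - i f (i x) then lies in F(V) and misses 0 on K. *)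

From HB Require Import structures.
From mathcomp Require Import all_boot all_order all_algebra.
From mathcomp Require Import all_classical all_reals all_analysis.
From mathcomp Require Import complex.
From mathcomp Require Import ring lra.
Import Order.TTheory GRing.Theory Num.Theory.
Import numFieldNormedType.Exports.

Set Implicit Arguments.
Unset Strict Implicit.
Unset Printing Implicit Defensive.

Local Open Scope classical_set_scope.
Local Open Scope ring_scope.
Local Open Scope convex_scope.

Section ConvexSets.
Variables (R : numDomainType) (E : lmodType R).

Lemma convex_set_combination (S : set E) : convex_set S ->
  forall (l : R) x y, 0 <= l -> l <= 1 -> S x -> S y -> S (l *: x + (1 - l) *: y).
Proof.
move=> cS l x y l0 l1 Sx Sy.
by have /set_mem := cS x y (Itv01 l0 l1) (mem_set Sx) (mem_set Sy).
Qed.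

Lemma convex_set_add (S T : set E) : convex_set S -> convex_set T ->
  convex_set [set s + t | s in S & t in T].
Proof.
move=> cS cT _ _ l /set_mem[s1 S1 [t1 T1 <-]] /set_mem[s2 S2 [t2 T2 <-]].
rewrite inE; exists ((s1 : convex_lmodType E) <| l |> s2).
  by apply/set_mem/cS; rewrite inE.
exists ((t1 : convex_lmodType E) <| l |> t2).
  by apply/set_mem/cT; rewrite inE.
by rewrite /conv /= !scalerDr addrACA.
Qed.

Lemma convex_set_translate (S : set E) (c : E) : convex_set S ->
  convex_set [set s + c | s in S].
Proof.
move=> cS _ _ l /set_mem[x Sx <-] /set_mem[y Sy <-]; rewrite inE.
exists ((x : convex_lmodType E) <| l |> y).
  by apply/set_mem/cS; rewrite inE.
by rewrite /conv /= !scalerDr addrACA -scalerDl subrKC scale1r.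
Qed.

End ConvexSets.

Section DominatedGraph.
Variables (R : realType) (E : lmodType R) (W : set E).

Record dominated_graph (G : set (E * R)) : Prop := DominatedGraph {
  graph_functional : forall x r s, G (x, r) -> G (x, s) -> r = s;
  graph_add : forall x r y s, G (x, r) -> G (y, s) -> G (x + y, r + s);
  graph_scale : forall a x r, G (x, r) -> G (a *: x, a * r);
  graph_le1 : forall x r, G (x, r) -> W x -> r <= 1 }.

Definition adjoin_graph (G : set (E * R)) (y : E) (c : R) : set (E * R) :=
  [set p | exists m g t, G (m, g) /\ p = (m + t *: y, g + t * c)].

Hypothesis W_convex : convex_set W.
Hypothesis W_absorbing : forall y, exists2 t : R, 0 < t & W (t *: y).

Lemma dominated_graph_slope G m1 g1 m2 g2 y t s : dominated_graph G ->
  G (m1, g1) -> G (m2, g2) -> 0 < t -> 0 < s ->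
  W (m1 + t *: y) -> W (m2 - s *: y) -> (g2 - 1) / s <= (1 - g1) / t.
Proof.
move=> [_ Gadd Gscale Gle1] G1 G2 t0 s0 W1 W2.
have st0 : 0 < s + t by rewrite addr_gt0.
pose l := s / (s + t).
have l0 : 0 <= l by rewrite divr_ge0 // ltW.
have l1 : l <= 1 by rewrite ler_pdivrMr // mul1r lerDl ltW.
have := convex_set_combination W_convex l0 l1 W1 W2.
have -> : l *: (m1 + t *: y) + (1 - l) *: (m2 - s *: y)
    = l *: m1 + (1 - l) *: m2.
  rewrite !scalerDr !scalerN !scalerA.
  have -> : (1 - l) * s = l * t by rewrite /l; field; rewrite lt0r_neq0.
  by rewrite addrACA subrr addr0.
move=> /(Gle1 _ _ (Gadd _ _ _ _ (Gscale l _ _ G1) (Gscale (1 - l) _ _ G2))).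
have -> : l * g1 + (1 - l) * g2 = (s * g1 + t * g2) / (s + t).
  by rewrite /l; field; rewrite lt0r_neq0.
rewrite ler_pdivrMr // mul1r => g_le; rewrite -subr_ge0.
have -> : (1 - g1) / t - (g2 - 1) / s = ((s + t) - (s * g1 + t * g2)) / (s * t).
  by field; rewrite !lt0r_neq0.
by rewrite divr_ge0 ?subr_ge0 // ltW // mulr_gt0.
Qed.

Lemma dominated_graph_adjoin_bound G y : dominated_graph G -> G (0, 0) ->
  exists c, forall m g t, G (m, g) -> W (m + t *: y) -> g + t * c <= 1.
Proof.
(* [c] may be taken between the lower bounds [(g - 1) / s] and the upper
   bounds [(1 - g) / t], which [dominated_graph_slope] keeps apart. *)
move=> GP G00.
pose L := [set l | exists m g s,
  [/\ G (m, g), 0 < s, W (m - s *: y) & l = (g - 1) / s]].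
have [s0 s0_gt0 Ws0] := W_absorbing (- y).
have [t0 t0_gt0 Wt0] := W_absorbing y.
have L_ub : ubound L ((1 - 0) / t0).
  move=> _ [m [g [s [Gmg s_gt0 Wm ->]]]].
  by apply: (dominated_graph_slope GP G00 Gmg t0_gt0 s_gt0 _ Wm); rewrite add0r.
have L_neq0 : L !=set0.
  by exists ((0 - 1) / s0), 0, 0, s0; rewrite sub0r -scalerN.
exists (sup L) => m g t Gmg; have [t_gt0|t_lt0|<-] := ltgtP 0 t => Wm.
- have : sup L <= (1 - g) / t.
    apply: ge_sup => // _ [m' [g' [s [Gmg' s_gt0 Wm' ->]]]].
    exact: (dominated_graph_slope GP Gmg Gmg' t_gt0 s_gt0 Wm Wm').
  by rewrite ler_pdivlMr // mulrC -lerBrDl.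
- have Lg : L ((g - 1) / (- t)).
    by exists m, g, (- t); rewrite oppr_gt0 scaleNr opprK.
  have := sup_upper_bound (conj L_neq0 (ex_intro _ _ L_ub)) Lg.
  rewrite ler_pdivrMr ?oppr_gt0 // mulrN (mulrC (sup L)) => h; lra.
- by rewrite mul0r addr0; apply: (graph_le1 GP Gmg); rewrite scale0r addr0 in Wm.
Qed.

Lemma graph_sub G x r y s : dominated_graph G -> G (x, r) -> G (y, s) ->
  G (x - y, r - s).
Proof.
move=> GP Gx /(graph_scale GP (-1)).
by rewrite scaleN1r mulN1r => /(graph_add GP Gx).
Qed.

Lemma adjoin_graph_functional G y c : dominated_graph G ->
  ~ (exists r, G (y, r)) ->
  forall x r s, adjoin_graph G y c (x, r) -> adjoin_graph G y c (x, s) -> r = s.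
Proof.
move=> GP Gy x r s [m1 [g1 [t1 [G1 [-> ->]]]]] [m2 [g2 [t2 [G2 [e ->]]]]].
have [t12|t12] := eqVneq t1 t2.
  rewrite -{}t12 in e *; have m12 : m1 = m2 by apply: (addIr (t1 *: y)).
  by rewrite m12 in G1; rewrite (graph_functional GP G1 G2).
exfalso; apply: Gy; exists ((t1 - t2)^-1 * (g2 - g1)).
have e2 : (t1 - t2) *: y = m2 - m1.
  by rewrite scalerBl -[m2](addrK (t2 *: y)) -e addrAC (addrC m1) addrK.
have -> : y = (t1 - t2)^-1 *: (m2 - m1).
  by rewrite -e2 scalerA mulVf ?subr_eq0 // scale1r.
exact: (graph_scale GP (t1 - t2)^-1 (graph_sub GP G2 G1)).
Qed.

Lemma dominated_graph_adjoin G y c : dominated_graph G ->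
  ~ (exists r, G (y, r)) ->
  (forall m g t, G (m, g) -> W (m + t *: y) -> g + t * c <= 1) ->
  dominated_graph (adjoin_graph G y c).
Proof.
move=> GP Gy Gc; split.
- exact: adjoin_graph_functional.
- move=> _ _ _ _ [m1 [g1 [t1 [G1 [-> ->]]]]] [m2 [g2 [t2 [G2 [-> ->]]]]].
  exists (m1 + m2), (g1 + g2), (t1 + t2); split; first exact: (graph_add GP).
  by rewrite scalerDl mulrDl; congr (_, _); rewrite addrACA.
- move=> a _ _ [m [g [t [Gmg [-> ->]]]]].
  exists (a *: m), (a * g), (a * t); split; first exact: (graph_scale GP).
  by rewrite scalerDr scalerA mulrDr mulrA.
- by move=> _ _ [m [g [t [Gmg [-> ->]]]]]; apply: Gc.
Qed.

Lemma adjoin_graph_sub G y c : G `<=` adjoin_graph G y c.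
Proof.
by move=> [m g] Gmg; exists m, g, 0; rewrite scale0r mul0r !addr0.
Qed.

Lemma dominated_graph_bigcup (F : set (set (E * R))) :
  (forall G, F G -> dominated_graph G) -> total_on F subset ->
  dominated_graph (\bigcup_(G in F) G).
Proof.
move=> FP Ftot.
have common p q : (\bigcup_(G in F) G) p -> (\bigcup_(G in F) G) q ->
    exists2 G, F G & G p /\ G q.
  move=> [G FG Gp] [H FH Hq].
  have [GH|HG] := Ftot _ _ FG FH.
    by exists H => //; split => //; apply: GH.
  by exists G => //; split => //; apply: HG.
split.
- move=> x r s Fr Fs; have [G /FP GP [Gr Gs]] := common _ _ Fr Fs.
  exact (graph_functional GP Gr Gs).
- move=> x r y s Fr Fs; have [G FG [Gr Gs]] := common _ _ Fr Fs.
  by exists G => //; exact (graph_add (FP _ FG) Gr Gs).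
- by move=> a x r [G FG Gr]; exists G => //; exact (graph_scale (FP _ FG) _ Gr).
- by move=> x r [G FG Gr]; exact (graph_le1 (FP _ FG) Gr).
Qed.

Lemma total_graph_scalar G : dominated_graph G ->
  (forall x, exists r, G (x, r)) -> exists f : {scalar E}, forall x, G (x, f x).
Proof.
move=> GP /choice[f Gf].
have f_scalar : scalar f.
  move=> a x z; apply: (graph_functional GP (Gf _)).
  exact (graph_add GP (graph_scale GP a (Gf x)) (Gf z)).
pose fL : {scalar E} := HB.pack f (GRing.isLinear.Build _ _ _ _ f f_scalar).
by exists fL.
Qed.

Theorem hahn_banach G0 : dominated_graph G0 -> G0 (0, 0) ->
  exists f : {scalar E},
    (forall x r, G0 (x, r) -> f x = r) /\ (forall x, W x -> f x <= 1).
Proof.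
move=> G0P G00.
(* The disjunct [G = set0] makes [P] closed under the union of the empty chain. *)
pose P := [set G | dominated_graph G /\ (G = set0 \/ G0 `<=` G)].
have [M [[MP MG0] Mmax]] : exists M, P M /\ forall G, M `<` G -> ~ P G.
  apply: Zorn_bigcup => F FP Ftot; split.
    by apply: dominated_graph_bigcup => // G /FP[].
  have [[G FG G0G]|noG] := pselect (exists2 G, F G & G0 `<=` G).
    by right => p /G0G Gp; exists G.
  left; apply/seteqP; split => // p [G FG Gp].
  have [_ [G_0|G0G]] := FP _ FG; first by rewrite G_0 in Gp.
  by apply: noG; exists G.
have {}MG0 : G0 `<=` M.
  case: MG0 => // M0; exfalso; apply: (Mmax G0); last by split => //; right.
  by rewrite M0; split => // /(_ _ G00).
have M_total x : exists r, M (x, r).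
  apply: contrapT => Mx.
  have [c Mc] := dominated_graph_adjoin_bound x MP (MG0 _ G00).
  have MxP := dominated_graph_adjoin MP Mx Mc.
  apply: (Mmax (adjoin_graph M x c)).
    split; first exact: adjoin_graph_sub.
    move=> sub; apply: Mx; exists c; apply: sub.
    by exists 0, 0, 1; rewrite scale1r mul1r !add0r; split => //; apply: MG0.
  split; first exact: MxP.
  by right; apply: subset_trans MG0 _; apply: adjoin_graph_sub.
have [f Mf] := total_graph_scalar MP M_total.
exists f; split.
- by move=> x r /MG0 Mx; exact (graph_functional MP (Mf x) Mx).
- by move=> x; exact (graph_le1 MP (Mf x)).
Qed.

Lemma dominated_line_graph y0 c0 : y0 != 0 ->
  (forall t, W (t *: y0) -> t * c0 <= 1) ->
  dominated_graph (range (fun t => (t *: y0, t * c0))).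
Proof.
move=> y0_neq0 line_le1; split.
- move=> x r s [t1 _ [<- <-]] [t2 _ [/eqP]].
  rewrite -subr_eq0 -scalerBl scaler_eq0 (negbTE y0_neq0) orbF subr_eq0.
  by move=> /eqP -> <-.
- move=> x r y s [t1 _ [<- <-]] [t2 _ [<- <-]].
  by exists (t1 + t2) => //; rewrite scalerDl mulrDl.
- by move=> a x r [t _ [<- <-]]; exists (a * t) => //; rewrite scalerA mulrA.
- by move=> x r [t _ [<- <-]]; apply: line_le1.
Qed.

Corollary hahn_banach_line y0 c0 : y0 != 0 ->
  (forall t, W (t *: y0) -> t * c0 <= 1) ->
  exists f : {scalar E}, f y0 = c0 /\ forall x, W x -> f x <= 1.
Proof.
move=> y0_neq0 line_le1.
have [|f [f_line f_le1]] := hahn_banach (dominated_line_graph y0_neq0 line_le1).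
  by exists 0 => //; rewrite scale0r mul0r.
by exists f; split => //; apply: f_line; exists 1 => //; rewrite scale1r mul1r.
Qed.

End DominatedGraph.

Lemma compact_closed_separated (M : topologicalZmodType) (K V : set M) :
  compact K -> closed V -> V `&` K = set0 ->
  exists2 N : set M, nbhs 0 N & forall k u, K k -> N u -> ~ V (k + u).
Proof.
move=> cK cV VK.
have K_near k : K k -> \forall k' \near k & u \near nbhs 0, ~ V (k' + u).
  move=> Kk; have /(_ (~` V)) := @add_continuous M (k, 0).
  rewrite /= addr0; apply.
  apply: open_nbhs_nbhs; split; first exact: closed_openC.
  by move=> Vk; have : (V `&` K) k by []; rewrite VK.
have N0 := proj1 (compact_near_coveringP K) cK _ _ _ _ K_near.
exists [set u | K `<=` (fun k => ~ V (k + u))]; first exact: N0.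
by move=> k u Kk /(_ k Kk).
Qed.

Section TvsNbhs.
Variables (K : numFieldType) (A : tvsType K).

Lemma nbhs0_convex (N : set A) : nbhs 0 N ->
  exists U : set A, [/\ nbhs 0 U, U `<=` N & convex_set U].
Proof.
move=> N0; have [B B_convex [B_open B_basis]] := @locally_convex _ A.
have [U [BU U0] UN] := B_basis 0 N N0.
exists U; split => //; last by apply: B_convex; rewrite inE.
by apply: open_nbhs_nbhs; split => //; apply: B_open.
Qed.

Lemma nbhs0_absorbing (U : set A) : nbhs 0 U ->
  forall y, exists2 t : K, 0 < t & U (t *: y).
Proof.
move=> U0 y; have := @scale_continuous K A (0, y) U.
rewrite /= scale0r => /(_ U0)[[B C]] /= [B0 Cy] BCU.
have [e /= e_gt0 eB] := (nbhs_ballP _ _).1 B0.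
exists (e / 2); first by rewrite divr_gt0.
apply: (BCU (e / 2, y)); split => //=; last exact: nbhs_singleton.
apply: eB; rewrite /ball /= sub0r normrN ger0_norm ?divr_ge0 ?ltW //.
by rewrite ltr_pdivrMr // ltr_pMr // ltr1n.
Qed.

Lemma nbhs0_scale (U : set A) (c : K) : c != 0 -> nbhs 0 U ->
  nbhs 0 [set h | U (c *: h)].
Proof.
move=> c_neq0 U0; apply: filterS (nbhs0Z (invr_neq0 c_neq0) U0) => _ [u Uu <-] /=.
by rewrite scalerA divff // scale1r.
Qed.

Lemma scalar_continuous_bounded (f : {scalar A}) (Z : set A) (M : K) :
  nbhs 0 Z -> (forall h, Z h -> `|f h| <= M) -> continuous f.
Proof.
move=> Z0 f_le x; apply/cvgrPdist_lt => e e_gt0.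
have M1_gt0 : 0 < M + 1.
  by rewrite ltr_wpDl // (le_trans _ (f_le _ (nbhs_singleton Z0))).
pose r := e / (M + 1).
have r_gt0 : 0 < r by rewrite divr_gt0.
apply: filterS (nbhsT x (nbhs0Z (lt0r_neq0 r_gt0) Z0)) => _ [_ [h Zh <-] <-] /=.
rewrite linearD linearZ /= opprD addrA subrr sub0r normrN normrM.
rewrite (ger0_norm (ltW r_gt0)); apply: (le_lt_trans (y := r * M)).
  by apply: ler_wpM2l; [exact: ltW | exact: f_le].
by rewrite /r mulrAC ltr_pdivrMr // ltr_pM2l // ltrDl ltr01.
Qed.

End TvsNbhs.

Local Open Scope complex_scope.

Definition realify (R : realType) (E : lmodType R[i]) : Type := E.

Section Realify.
Variables (R : realType) (E : lmodType R[i]).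

HB.instance Definition _ := GRing.Zmodule.on (realify E).

Let rscale (a : R) (x : realify E) : realify E := a%:C *: (x : E).

Let rscaleA a b x : rscale a (rscale b x) = rscale (a * b) x.
Proof. by rewrite /rscale scalerA rmorphM. Qed.

Let rscale1 : left_id 1 rscale.
Proof. by move=> x; rewrite /rscale rmorph1 scale1r. Qed.

Let rscaleDr : right_distributive rscale +%R.
Proof. by move=> a x y; rewrite /rscale scalerDr. Qed.

Let rscaleDl x : {morph rscale^~ x : a b / a + b}.
Proof. by move=> a b; rewrite /rscale rmorphD scalerDl. Qed.

HB.instance Definition _ :=
  GRing.Zmodule_isLmodule.Build R (realify E) rscaleA rscale1 rscaleDr rscaleDl.

Lemma convex_set_realify (S : set E) :
  convex_set S -> convex_set (S : set (realify E)).
Proof.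
move=> cS x y l /set_mem Sx /set_mem Sy; rewrite inE.
have l0 : 0 <= (l%:num)%:C by rewrite lecR.
have l1 : (l%:num)%:C <= 1 by rewrite lecR.
have := convex_set_combination cS l0 l1 Sx Sy.
by rewrite -(rmorph1 (real_complex R)) -rmorphB.
Qed.

End Realify.

Section Complexify.
Variables (R : realType) (E : lmodType R[i]).

(* The complex functional with real part [f]: if [phi] is complex linear then
   [Im (phi x) = - Re (phi ('i *: x))]. *)
Definition complexify (f : realify E -> R) (x : E) : R[i] :=
  Complex (f x) (- f ('i *: x)).

Variable f : {scalar (realify E)}.

Let fD (x y : E) : f (x + y) = f x + f y.
Proof. exact: linearD. Qed.

Let fZ (a : R) x : f (a%:C *: x) = a * f x.
Proof. exact: scalarZ. Qed.

Let f_scale (a : R[i]) (x : E) :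
  f (a *: x) = complex.Re a * f x + complex.Im a * f ('i *: x).
Proof.
have {1}-> : a = (complex.Re a)%:C + (complex.Im a)%:C * 'i.
  case: a => al be; apply/eqP; rewrite eq_complex /=.
  by apply/andP; split; apply/eqP; ring.
by rewrite scalerDl -scalerA fD !fZ.
Qed.

Let f_ii (x : E) : f ('i *: ('i *: x)) = - f x.
Proof.
by rewrite scalerA -expr2 sqr_i -(rmorphN1 (real_complex R)) fZ mulN1r.
Qed.

Lemma complexify_scalar : scalar (complexify f).
Proof.
move=> a x y; rewrite /complexify scalerDr !fD.
have -> : 'i *: (a *: x) = a *: ('i *: x) by rewrite !scalerA mulrC.
rewrite (f_scale a x) (f_scale a ('i *: x)) f_ii.
case: a => al be /=; apply/eqP; rewrite eq_complex /=.
by apply/andP; split; apply/eqP; ring.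
Qed.

HB.instance Definition _ :=
  GRing.isLinear.Build R[i] E R[i] *%R (complexify f) complexify_scalar.

End Complexify.

Section ComplexTvs.
Variables (R : realType) (A : tvsType R[i]).

Lemma nbhs0_absorbing_real (U : set A) : nbhs 0 U ->
  forall y, exists2 t : R, 0 < t & U (t%:C *: y).
Proof.
move=> U0 y; have [[a b]] := nbhs0_absorbing U0 y.
by rewrite ltcE /= => /andP[/eqP -> a_gt0] Uy; exists a.
Qed.

Lemma subspaceZ (V : set A) a x : is_subspace V -> V x -> V (a *: x).
Proof. by move=> [V0 VD] Vx; rewrite -[_ *: x]addr0; apply: VD. Qed.

Lemma subspace_convex (V : set A) : is_subspace V -> convex_set V.
Proof.
move=> VS x y l /set_mem Vx /set_mem Vy; rewrite inE.
by apply: VS.2 => //; apply: subspaceZ.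
Qed.

Lemma normc_le (a b : R) : `|a +i* b| <= (`|a| + `|b|)%:C.
Proof.
rewrite normc_def lecR /= -[leRHS]ger0_norm ?addr_ge0 // -sqrtr_sqr.
apply: ler_wsqrtr; rewrite sqrrD.
rewrite -(real_normK (num_real a)) -(real_normK (num_real b)).
by rewrite lerD2r lerDl mulrn_wge0 // mulr_ge0.
Qed.

Lemma complexify_cdual (f : {scalar realify A}) (U : set A) :
  nbhs 0 U -> (forall u, U u -> f u <= 1) -> cdual (complexify f : A -> R[i]^o).
Proof.
move=> U0 f_le1; split; first exact: scalarP.
pose Z := [set h | [/\ U h, U (- h), U ('i *: h) & U (- ('i *: h))]].
apply: (@scalar_continuous_bounded _ _ (complexify f) Z 2).
  have i_neq0 : 'i != 0 :> R[i] by rewrite eq_complex /= oner_eq0 andbF.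
  have Uc (c : R[i]) : c != 0 -> nbhs 0 [set h | U (c *: h)].
    by move=> c_neq0; apply: nbhs0_scale.
  have N1_neq0 : -1 != 0 :> R[i] by rewrite oppr_eq0 oner_eq0.
  have Ni_neq0 : - 'i != 0 :> R[i] by rewrite oppr_eq0.
  apply: filterS (filterI (filterI U0 (Uc _ N1_neq0))
                          (filterI (Uc _ i_neq0) (Uc _ Ni_neq0))).
  move=> h [[Uh /= Unh] [/= Uih /= Unih]].
  by rewrite scaleN1r in Unh; rewrite scaleNr in Unih.
move=> h [Uh Unh Uih Unih].
have f_norm_le1 x : U x -> U (- x) -> `|f x| <= 1.
  by move=> Ux Unx; rewrite ler_norml lerNl -linearN !f_le1.
apply: (le_trans (normc_le _ _)); rewrite normrN.
have -> : 2 = (1 + 1 : R)%:C by rewrite rmorphD rmorph1.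
by rewrite lecR lerD // f_norm_le1.
Qed.

End ComplexTvs.

Section Separation.
Variables (R : realType) (A : tvsType R[i]) (K U V : set A) (k0 : A).
Hypotheses (K_convex : convex_set K) (Kk0 : K k0).
Hypotheses (U0 : nbhs 0 U) (U_convex : convex_set U).
Hypothesis V_subspace : is_subspace V.
Hypothesis KUV : forall k u, K k -> U u -> ~ V (k + u).

Let W : set (realify A) :=
  [set x - k0 | x in [set y + v | y in [set k + u | k in K & u in U] & v in V]].

Let W_convex : convex_set W.
Proof.
apply: convex_set_translate; apply: convex_set_add; last first.
  exact/convex_set_realify/subspace_convex.
by apply: convex_set_add; apply: convex_set_realify.
Qed.

Let W_mem k u v : K k -> U u -> V v -> W (k + u + v - k0).
Proof.
move=> Kk Uu Vv; exists (k + u + v) => //.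
by exists (k + u); [exists k => //; exists u | exists v].
Qed.

Let U_sub_W u : U u -> W u.
Proof.
move=> Uu; have := W_mem Kk0 Uu V_subspace.1.
by rewrite addr0 addrC addKr.
Qed.

Let W_absorbing (y : realify A) : exists2 t : R, 0 < t & W (t *: y).
Proof.
by have [t t_gt0 Uy] := nbhs0_absorbing_real U0 y; exists t => //; apply: U_sub_W.
Qed.

Let W_line t : W (t *: (- k0 : realify A)) -> t * 1 <= 1.
Proof.
rewrite mulr1 => Wt; rewrite leNgt; apply/negP => t_gt1.
have t_gt0 : 0 < t := lt_trans ltr01 t_gt1.
have W0 : W 0 := U_sub_W (nbhs_singleton U0).
have l_ge0 : 0 <= t^-1 by rewrite invr_ge0 ltW.
have l_le1 : t^-1 <= 1 by rewrite invf_le1 // ltW.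
have := convex_set_combination W_convex l_ge0 l_le1 Wt W0.
rewrite scaler0 addr0 scalerA mulVf ?lt0r_neq0 // scale1r.
move=> [_ [_ [k Kk [u Uu <-]] [v Vv <-]] e].
have kuv0 : k + u + v = 0 by apply: (addIr (- k0)); rewrite add0r.
apply: (KUV Kk Uu); rewrite -[k + u]addr0 -(subrr v) addrA kuv0 add0r.
by rewrite -scaleN1r; apply: subspaceZ.
Qed.

Lemma separating_functional : exists f : {scalar realify A},
  [/\ forall v, V v -> f v = 0, forall k, K k -> f k < 0
    & forall u, U u -> f u <= 1].
Proof.
have k0_neq0 : (- k0 : realify A) != 0.
  rewrite oppr_eq0; apply/eqP => k0_eq0.
  apply: (KUV Kk0 (nbhs_singleton U0)).
  by rewrite k0_eq0 addr0; exact: V_subspace.1.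
have [f [f_k0 f_le1]] := hahn_banach_line W_convex W_absorbing k0_neq0 W_line.
exists f; split.
- move=> v Vv; apply/eqP; apply: contraT => fv_neq0.
  have V2v := subspaceZ ((2 / f v)%:C) V_subspace Vv.
  have := f_le1 _ (W_mem Kk0 (nbhs_singleton U0) V2v).
  by rewrite addr0 addrC addKr (scalarZ f (2 / f v) v) divfK // leNgt ltr1n.
- move=> k Kk; have [t t_gt0 Ut] := nbhs0_absorbing_real U0 (- k0).
  have := f_le1 _ (W_mem Kk Ut V_subspace.1).
  rewrite addr0 !linearD (scalarZ f t (- k0 : realify A)) f_k0; lra.
- by move=> u /U_sub_W /f_le1.
Qed.

End Separation.

Lemma Fann_Sset_disjoint (R : realType) (A : tvsType R[i]) (K V : set A) phi :
  Fann V phi -> Sset K [set z : R[i]^o | z != 0] phi -> V `&` K = set0.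
Proof.
move=> [_ phiV] [_ phiK]; apply/seteqP; split => // x [Vx Kx].
by have := phiK _ (imageP phi Kx); rewrite /= phiV // eqxx.
Qed.

Unset Implicit Arguments.

Theorem corollary7p4 (R : realType) (A : tvsType R[i]) (K : set A) :
  [set V | MaxA V /\ (Fann V `&` Sset K [set z : R[i]^o | z != 0]) !=set0]
    `<=` checkK K /\
  (convex_set K -> compact K ->
   [set V | MaxA V /\ (Fann V `&` Sset K [set z : R[i]^o | z != 0]) !=set0]
     = checkK K).
Proof.
have sub : [set V | MaxA V /\
    (Fann V `&` Sset K [set z : R[i]^o | z != 0]) !=set0] `<=` checkK K.
  move=> V [MV [phi [Fphi Sphi]]].
  by split => //; exact: Fann_Sset_disjoint Fphi Sphi.
split => // K_convex K_compact; apply/seteqP; split => //.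
move=> V [[V_closed V_subspace] VK].
split => //; have [[k0 Kk0]|K_empty] := pselect (K !=set0); last first.
  have zero_cdual : cdual (fun=> 0 : R[i]^o).
    by split; [move=> a x y; rewrite scaler0 addr0 | exact: cst_continuous].
  exists (fun=> 0); split; split => // z [k Kk].
  by exfalso; apply: K_empty; exists k.
have [N N0 KNV] := compact_closed_separated K_compact V_closed VK.
have [U [U0 UN U_convex]] := nbhs0_convex N0.
have [f [fV fK fU]] := separating_functional K_convex Kk0 U0 U_convex V_subspace
  (fun k u Kk Uu => KNV k u Kk (UN u Uu)).
have phi_cdual := complexify_cdual U0 fU.
exists (complexify f); split; split => //.
- by move=> v Vv; rewrite /complexify fV // fV ?oppr0 //; apply: subspaceZ.
- by move=> _ [k Kk <-]; rewrite /= eq_complex /= (lt_eqF (fK k Kk)).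
Qed.
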